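(* Consider the two-layer multi-item order fulfillment problem described in the context, with $K\ge 1$ FDCs, fixed costs $f_0,f_1,\dots,f_K\ge 0$, and let $f=\min_{k\in[K]}f_k$. Suppose there are constants $b>a>0$ such that all variable costs satisfy $a\le c_{k,t}^i\le b$. For a threshold $\theta\ge 0$, let \textsc{Order-Size F-Priority} be the Gated Priority-based Greedy policy that uses, for every item $i$, the priority ranking $\prec_{\mathrm F}$ on $\{0,1,\dots,K\}$ defined by $k\prec_{\mathrm F}j \iff f_k<f_j$ or ($f_k=f_j$ and $k<j$), and the gating condition $G=\mathbb{I}\big(\sum_{i=1}^n S_t^i>\theta\big)$. Then \[\mathfrak{R}(\textsc{Order-Size F-Priority})\le \max\left\{\theta,\ \frac{f_0+b\theta}{f+a\theta},\ \frac{b}{a}\right\}.\] In particular, if $\theta=\sqrt{\frac{f_0}{a}+\frac{(f-b)^2}{4a^2}}-\frac{f-b}{2a}$, then \[\mathfrak{R}(\textsc{Order-Size F-Priority})\le \max\left\{\sqrt{\frac{f_0}{a}+\frac{(f-b)^2}{4a^2}}-\frac{f-b}{2a},\ \frac{b}{a}\right\}.\]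
   Context: Problem. There are $n$ items indexed by $i\in[n]=\{1,\dots,n\}$, $K$ front distribution centers (FDCs) indexed by $k\in[K]$, and one regional distribution center (RDC) indexed by $k=0$ that has unlimited inventory of every item. FDC $k$ initially holds $I_{k,0}^i\ge 0$ units of item $i$; FDC inventory is never replenished. In each period $t=1,\dots,T$ an order $\boldsymbol S_t=(S_t^i)_{i\in[n]}$ of nonnegative integers arrives. After observing $\boldsymbol S_t$ and the per-unit variable costs $c_{k,t}^i$ ($k=0,\dots,K$, $i\in[n]$), a policy must immediately and irrevocably choose quantities $m_{k,t}^i\ge 0$ with $\sum_{k=0}^K m_{k,t}^i=S_t^i$ for all $i$ and $m_{k,t}^i\le I_{k,t-1}^i$ for all $k\in[K]$, where $I_{k,t}^i=I_{k,0}^i-\sum_{\tau=1}^t m_{k,\tau}^i$. The cost of period $t$ is $\sum_{k=0}^K\big[f_k\,\mathbb{I}(\sum_{i=1}^n m_{k,t}^i>0)+\sum_{i=1}^n c_{k,t}^i m_{k,t}^i\big]$ (fixed costs $f_k$ are given); the total cost is the sum over all periods. An online policy (possibly randomized) chooses the period-$t$ quantities using only the fixed costs, initial inventories, and the orders and variable costs of periods $1,\dots,t$. An instance $I$ consists of $n,T$, the initial inventories, variable costs and orders; $\mathrm{ALG}(I)$ is the (expected) total cost of the policy and $\mathrm{OPT}(I)$ is the minimum total cost of a feasible plan chosen with full knowledge of the instance. The competitive ratio is $\mathfrak R(\mathrm{ALG})=\sup \mathrm{ALG}(I)/\mathrm{OPT}(I)$, the supremum over all $n,T$, all initial inventories,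 all variable costs $c_{k,t}^i\in[a,b]$ and all order sequences. Gated Priority-based Greedy policy: given for each item $i$ a total order $\prec_i$ on $\{0,1,\dots,K\}$ and a Boolean gating condition $G$ (a function of the fixed costs, current variable costs, current order and greedy plan), in each period $t$ it computes the greedy plan $\hat m_{k,t}^i=\min\big\{\big(S_t^i-\sum_{k'\in[K]:k'\prec_i k}I_{k',t-1}^i\big)^+,\ I_{k,t-1}^i\big\}\cdot\mathbb{I}(k\prec_i 0)$ for $k\in[K]$ and $\hat m_{0,t}^i=S_t^i-\sum_{k\in[K]}\hat m_{k,t}^i$; if $G=1$ it sets $m_{0,t}^i=S_t^i$ and $m_{k,t}^i=0$ for $k\in[K]$ (whole order to the RDC), otherwise $m_{k,t}^i=\hat m_{k,t}^i$ for all $k,i$; then it updates inventories. *)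

From HB Require Import structures.
From mathcomp Require Import all_boot all_order all_algebra.
Set Implicit Arguments. Unset Strict Implicit. Unset Printing Implicit Defensive.
Import Order.TTheory GRing.Theory Num.Theory.
Local Open Scope ring_scope.

Section Fulfillment.
Variables (R : realFieldType) (K n : nat).

(* Locations are 'I_K.+1 : index 0 is the RDC, indices 1..K are the FDCs.
   Items are 'I_n.  Periods t = 1..T are represented by 0-based t < T. *)
Definition rdc : 'I_K.+1 := ord0.

Definition qty := 'I_K.+1 -> 'I_n -> nat.

(* Greedy plan for per-item priority orders prec i (k \prec_i j = prec i k j),
   current inventories I (= I_{.,t-1}) and current order S (= S_t).
   Nat subtraction is truncated, i.e. it is (.)^+ . *)
Definition greedy_hat (prec : 'I_n -> rel 'I_K.+1) (I : qty) (S : 'I_n -> nat)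
  (k : 'I_K.+1) (i : 'I_n) : nat :=
  if prec i k rdc then
    minn (S i - \sum_(k' < K.+1 | (k' != rdc) && prec i k' k) I k' i)%N (I k i)
  else 0%N.

Definition greedy_plan (prec : 'I_n -> rel 'I_K.+1) (I : qty) (S : 'I_n -> nat) : qty :=
  fun k i => if k == rdc
             then (S i - \sum_(k' < K.+1 | k' != rdc) greedy_hat prec I S k' i)%N
             else greedy_hat prec I S k i.

(* The gate G may depend
   on the current variable costs, the current order and the greedy plan
   (fixed costs are parameters and may be closed over by G). *)
Definition gpg_decision (prec : 'I_n -> rel 'I_K.+1)
  (G : ('I_K.+1 -> 'I_n -> R) -> ('I_n -> nat) -> qty -> bool)
  (ct : 'I_K.+1 -> 'I_n -> R) (S : 'I_n -> nat) (I : qty) : qty :=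
  let mh := greedy_plan prec I S in
  if G ct S mh then (fun k i => if k == rdc then S i else 0%N) else mh.

(* Inventories after t periods under the policy (gpg_inv ... t = I_{.,t}). *)
Fixpoint gpg_inv (prec : 'I_n -> rel 'I_K.+1)
  (G : ('I_K.+1 -> 'I_n -> R) -> ('I_n -> nat) -> qty -> bool)
  (I0 : qty) (S : nat -> 'I_n -> nat) (c : nat -> 'I_K.+1 -> 'I_n -> R)
  (t : nat) : qty :=
  match t with
  | 0 => I0
  | t'.+1 =>
      let I := gpg_inv prec G I0 S c t' in
      let m := gpg_decision prec G (c t') (S t') I in
      fun k i => (I k i - m k i)%N
  end.

Definition gpg_plan (prec : 'I_n -> rel 'I_K.+1)
  (G : ('I_K.+1 -> 'I_n -> R) -> ('I_n -> nat) -> qty -> bool)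
  (I0 : qty) (S : nat -> 'I_n -> nat) (c : nat -> 'I_K.+1 -> 'I_n -> R)
  (t : nat) : qty :=
  gpg_decision prec G (c t) (S t) (gpg_inv prec G I0 S c t).

Definition period_cost (f : 'I_K.+1 -> R) (ct : 'I_K.+1 -> 'I_n -> R) (m : qty) : R :=
  \sum_(k < K.+1)
    (f k * (if (0 < \sum_(i < n) m k i)%N then 1 else 0)
     + \sum_(i < n) ct k i * (m k i)%:R).

Definition total_cost (f : 'I_K.+1 -> R) (c : nat -> 'I_K.+1 -> 'I_n -> R)
  (T : nat) (m : nat -> qty) : R :=
  \sum_(t < T) period_cost f (c t) (m t).

Definition feasible (I0 : qty) (S : nat -> 'I_n -> nat) (T : nat)
  (m : nat -> qty) : Prop :=
  (forall t, (t < T)%N -> forall i, (\sum_(k < K.+1) m t k i)%N = S t i) /\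
  (forall t, (t < T)%N -> forall k, k != rdc -> forall i,
      (m t k i <= I0 k i - \sum_(s < t) m s k i)%N).

Definition prec_F (f : 'I_K.+1 -> R) : rel 'I_K.+1 :=
  fun k j => (f k < f j) || ((f k == f j) && (k < j)%N).

Definition order_size_gate (theta : R) :
  ('I_K.+1 -> 'I_n -> R) -> ('I_n -> nat) -> qty -> bool :=
  fun _ S _ => theta < (\sum_(i < n) S i)%N%:R.

Definition os_fp_cost (f : 'I_K.+1 -> R) (theta : R) (I0 : qty)
  (S : nat -> 'I_n -> nat) (c : nat -> 'I_K.+1 -> 'I_n -> R) (T : nat) : R :=
  total_cost f c T (gpg_plan (fun _ => prec_F f) (order_size_gate theta) I0 S c).

(* f = min_{k in [K]} f_k (the default ord_max is itself an FDC when K >= 1). *)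
Definition fmin (f : 'I_K.+1 -> R) : R :=
  \big[Num.min/f ord_max]_(k < K.+1 | k != rdc) f k.

End Fulfillment.

From HB Require Import structures.
From mathcomp Require Import all_boot all_order all_algebra.
From mathcomp Require Import zify ring lra.
Set Implicit Arguments. Unset Strict Implicit. Unset Printing Implicit Defensive.
Import Order.TTheory GRing.Theory Num.Theory.
Local Open Scope ring_scope.

(* Charge every unit shipped from location k the fixed cost f_k.  This linearised
   fixed cost dominates the fixed costs actually paid, and in a period whose order
   size s is at most θ it is at most θ times the fixed costs paid by any plan,
   since a location ships at most s units; variable costs differ by at most a
   factor b/a.  In a period with s > θ the policy ships everything from the RDC at
   cost at most f0 + b s, whereas any plan pays at least f_k + a s for some location
   k that it uses.  Over the small periods, F-priority greedy draws from a location only after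
   exhausting every cheaper FDC, so by an exchange argument its cumulative
   linearised fixed cost is at most that of any feasible plan. *)

Section GreedyFill.
Variables (T : finType) (lt : rel T).
Hypothesis irr_lt : irreflexive lt.
Hypothesis trans_lt : transitive lt.
Hypothesis total_lt : forall x y, x != y -> lt x y || lt y x.

Let rank x := #|[set y | lt y x]|.

Lemma rank_lt x y : lt x y -> (rank x < rank y)%N.
Proof.
move=> lt_xy; apply/proper_card/properP; split.
  by apply/subsetP=> z; rewrite !inE => /trans_lt; apply.
by exists x; rewrite !inE ?lt_xy ?irr_lt.
Qed.

Lemma exists_lt_max (D : {set T}) x0 : x0 \in D ->
  exists2 x, x \in D & forall y, y \in D -> y != x -> lt y x.
Proof.
move=> Dx0; have [x Dx max_x] := arg_maxnP rank Dx0.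
exists x => // y Dy neq_yx; case/orP: (total_lt neq_yx) => // lt_xy.
by have := max_x y Dy; rewrite /= leqNgt rank_lt.
Qed.

Variables (U : {set T}) (W : T -> nat) (s : nat).

Definition greedy_fill x := minn (s - \sum_(y in U | lt y x) W y) (W x).

Lemma sum_greedy_fill_downclosed (D : {set T}) : D \subset U ->
  (forall x y, x \in D -> y \in U -> lt y x -> y \in D) ->
  \sum_(x in D) greedy_fill x = minn s (\sum_(x in D) W x).
Proof.
have [N ltDN] := ubnP #|D|; elim: N => // N IH in D ltDN *.
move=> sDU closedD; have [-> | [x0 Dx0]] := set_0Vmem D.
  by rewrite !big_set0 minn0.
have [x Dx max_x] := exists_lt_max Dx0.
have below_x y : (y \in U) && lt y x = (y \in D :\ x).
  rewrite !inE; apply/andP/andP => [[Uy lt_yx] | [neq_yx Dy]].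
    split; last exact: closedD Dx Uy lt_yx.
    by apply: contraTneq lt_yx => ->; rewrite irr_lt.
  by split; [exact: (subsetP sDU) | exact: max_x].
rewrite (big_setD1 x Dx) (big_setD1 x Dx) /= IH.
- rewrite /greedy_fill (eq_bigl _ _ below_x); set P := (\sum_(y in D :\ x) W y)%N.
  lia.
- by move: ltDN; rewrite (cardsD1 x) Dx.
- exact: subset_trans (subsetDl D [set x]) sDU.
move=> y z; rewrite !inE => /andP[neq_yx Dy] Uz lt_zy.
rewrite (closedD y z) // andbT; apply: contraTneq lt_zy => ->.
by apply/negP => lt_xy; move: (trans_lt lt_xy (max_x y Dy neq_yx)); rewrite irr_lt.
Qed.

Lemma sum_greedy_fill : \sum_(x in U) greedy_fill x = minn s (\sum_(x in U) W x).
Proof. exact: sum_greedy_fill_downclosed. Qed.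

End GreedyFill.

Section FPriority.
Variables (R : realFieldType) (K n : nat) (f : 'I_K.+1 -> R).
Local Notation prec := (prec_F f).
Local Notation rdc := (rdc K).

Lemma prec_F_irr : irreflexive prec.
Proof. by move=> k; rewrite /prec_F ltxx ltnn andbF. Qed.

Lemma prec_F_trans : transitive prec.
Proof.
move=> y x z; rewrite /prec_F.
case/orP=> [lt_xy | /andP[/eqP-> lt_xy]] /orP[lt_yz | /andP[/eqP<- lt_yz]].
- by rewrite (lt_trans lt_xy lt_yz).
- by rewrite lt_xy.
- by rewrite lt_yz.
- by rewrite eqxx (ltn_trans lt_xy lt_yz) orbT.
Qed.

Lemma prec_F_total x y : x != y -> prec x y || prec y x.
Proof. by rewrite /prec_F; case: ltgtP => //= _; rewrite -neq_ltn. Qed.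

Lemma prec_F_of_lt x y : f x < f y -> prec x y.
Proof. by rewrite /prec_F => ->. Qed.

Lemma prec_F_le x y : prec x y -> f x <= f y.
Proof. by case/orP => [/ltW | /andP[/eqP-> _]]. Qed.

Lemma prec_F_neq x y : prec x y -> x != y.
Proof. by apply: contraTneq => ->; rewrite prec_F_irr. Qed.

Definition ahead_of_rdc : {set 'I_K.+1} := [set k | prec k rdc].

Variables (I : qty K n) (S : 'I_n -> nat) (i : 'I_n).
Local Notation hat k := (greedy_hat (fun _ => prec) I S k i).
Local Notation plan k := (greedy_plan (fun _ => prec) I S k i).

Lemma greedy_hat_le k : (hat k <= I k i)%N.
Proof. by rewrite /greedy_hat; case: ifP => // _; apply: geq_minr. Qed.

Lemma greedy_hat_gt0 k : (0 < hat k)%N -> prec k rdc.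
Proof. by rewrite /greedy_hat; case: ifP. Qed.

Lemma greedy_hat_eq0 k : ~~ prec k rdc -> hat k = 0%N.
Proof. by rewrite /greedy_hat => /negbTE->. Qed.

Lemma sum_fdc_greedy_hat :
  (\sum_(k < K.+1 | k != rdc) hat k = \sum_(k in ahead_of_rdc) hat k)%N.
Proof.
rewrite big_mkcond [RHS]big_mkcond /=; apply: eq_bigr => k _; rewrite inE.
have [/prec_F_neq-> // | /greedy_hat_eq0->] := boolP (prec k rdc).
by case: ifP.
Qed.

Lemma sum_greedy_hat :
  (\sum_(k in ahead_of_rdc) hat k = minn (S i) (\sum_(k in ahead_of_rdc) I k i))%N.
Proof.
rewrite -(sum_greedy_fill prec_F_irr prec_F_trans prec_F_total).
apply: eq_bigr => k; rewrite inE => prec_k; rewrite /greedy_hat prec_k.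
congr minn; congr (_ - _)%N; apply: eq_bigl => k'; rewrite inE.
case prec_k'k : (prec k' k); rewrite ?andbF ?andbT //.
have prec_k' := prec_F_trans prec_k'k prec_k.
by rewrite prec_k' (prec_F_neq prec_k').
Qed.

Lemma greedy_plan_sum : (\sum_(k < K.+1) plan k = S i)%N.
Proof.
rewrite (bigD1 rdc) //= {1}/greedy_plan eqxx.
rewrite (eq_bigr (fun k => hat k)) => [|k /negbTE]; last by rewrite /greedy_plan => ->.
by rewrite subnK // sum_fdc_greedy_hat sum_greedy_hat geq_minl.
Qed.

Lemma greedy_plan_exhausts_cheaper j k :
  (0 < plan j)%N -> f k < f j -> k != rdc -> hat k = I k i.
Proof.
move=> plan_j_gt0 lt_kj fdc_k; have prec_kj := prec_F_of_lt lt_kj.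
have [rdc_j | fdc_j] := eqVneq j rdc.
  move: plan_j_gt0; rewrite rdc_j /greedy_plan eqxx subn_gt0.
  rewrite sum_fdc_greedy_hat sum_greedy_hat gtn_min ltnn /= => lt_IS.
  have /eqP : (\sum_(k in ahead_of_rdc) hat k = \sum_(k in ahead_of_rdc) I k i)%N.
    by rewrite sum_greedy_hat; apply/minn_idPr/ltnW.
  rewrite (leqif_sum (fun k _ => leqif_eq (greedy_hat_le k))).2.
  have ahead_k : k \in ahead_of_rdc by rewrite inE -rdc_j.
  by move/forall_inP/(_ k ahead_k)/eqP.
move: plan_j_gt0; rewrite /greedy_plan (negbTE fdc_j) => hat_j_gt0.
have prec_j := greedy_hat_gt0 hat_j_gt0.
move: hat_j_gt0; rewrite /greedy_hat prec_j (prec_F_trans prec_kj prec_j).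
set Pj := (\sum_(k' < K.+1 | (k' != rdc) && prec k' j) I k' i)%N.
set Pk := (\sum_(k' < K.+1 | (k' != rdc) && prec k' k) I k' i)%N.
have : (Pk + I k i <= Pj)%N.
  rewrite /Pj (bigD1 k) /=; last by rewrite fdc_k prec_kj.
  rewrite addnC leq_add2l /Pk [X in (X <= _)%N]big_mkcond [X in (_ <= X)%N]big_mkcond /=.
  apply: leq_sum => k' _; case: ifP => // /andP[fdc_k' prec_k'k].
  by rewrite fdc_k' (prec_F_trans prec_k'k prec_kj) (prec_F_neq prec_k'k).
lia.
Qed.
End FPriority.

Lemma cheapest_first_weighted_sum_le (R : realDomainType) (J : finType)
    (g : J -> R) (X Y : J -> nat) :
  (forall j, 0 <= g j) -> (\sum_j X j <= \sum_j Y j)%N ->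
  (forall j k, (0 < X j)%N -> g k < g j -> (Y k <= X k)%N) ->
  \sum_j g j * (X j)%:R <= \sum_j g j * (Y j)%:R.
Proof.
move=> g_ge0 le_XY cheapest_first.
have [/existsP[j0 X_j0] | /existsPn X0] := boolP [exists j, 0 < X j]%N; last first.
  rewrite big1 => [|j _]; last by move: (X0 j); rewrite lt0n negbK => /eqP->; rewrite mulr0.
  by apply: sumr_ge0 => j _; rewrite mulr_ge0.
have [jm X_jm max_jm] := arg_maxP g (P := [pred j | 0 < X j]%N) X_j0.
have le_mu j : g j * (X j)%:R - g j * (Y j)%:R <= g jm * ((X j)%:R - (Y j)%:R).
  case: (ltgtP (g j) (g jm)) => [lt_j | lt_jm | ->]; last by rewrite mulrBr.
  - have : (Y j)%:R <= (X j)%:R :> R by rewrite ler_nat (cheapest_first jm j).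
    nra.
  - have -> : X j = 0%N.
      by apply/eqP; rewrite -leqn0 leqNgt; apply: contraTN lt_jm => /max_jm; rewrite -leNgt.
    have := ler0n R (Y j); nra.
have : \sum_j (g j * (X j)%:R - g j * (Y j)%:R) <= \sum_j g jm * ((X j)%:R - (Y j)%:R).
  by apply: ler_sum => j _; apply: le_mu.
rewrite sumrB -mulr_sumr sumrB -!natr_sum.
have : (\sum_j X j)%N%:R <= (\sum_j Y j)%N%:R :> R by rewrite ler_nat.
have := g_ge0 jm; nra.
Qed.

Definition meets (K n : nat) (q : qty K n) (s : 'I_n -> nat) :=
  forall i, (\sum_k q k i)%N = s i.

Definition order_size (R : realFieldType) (n : nat) (s : 'I_n -> nat) : R :=
  (\sum_i s i)%N%:R.

Definition linear_fixed_cost (R : realFieldType) (K n : nat) (f : 'I_K.+1 -> R)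
    (q : qty K n) : R :=
  \sum_k \sum_i f k * (q k i)%:R.

Definition rdc_only (K n : nat) (s : 'I_n -> nat) : qty K n :=
  fun k i => if k == rdc K then s i else 0%N.
Arguments rdc_only K {n} s.

Section PeriodCost.
Variables (R : realFieldType) (K n : nat) (f : 'I_K.+1 -> R).
Variables (ct : 'I_K.+1 -> 'I_n -> R) (a b : R) (s : 'I_n -> nat).
Hypothesis f_ge0 : forall k, 0 <= f k.
Hypothesis ct_ab : forall k i, a <= ct k i <= b.
Local Notation s_size := (order_size R s).

Lemma sum_uniform_cost (w : R) (q : qty K n) : meets q s ->
  \sum_k \sum_i w * (q k i)%:R = w * s_size.
Proof.
move=> q_s; rewrite exchange_big /order_size natr_sum mulr_sumr; apply: eq_bigr => i _.
by rewrite -mulr_sumr -natr_sum q_s.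
Qed.

Lemma period_cost_le_linear (q : qty K n) : meets q s ->
  period_cost f ct q <= linear_fixed_cost f q + b * s_size.
Proof.
move=> q_s; rewrite /period_cost -(sum_uniform_cost b q_s) -big_split /=.
apply: ler_sum => k _; apply: lerD.
  rewrite -mulr_sumr -natr_sum; case: ifP => [used_k | _].
    by rewrite ler_wpM2l // ler1n.
  by rewrite mulr0 mulr_ge0.
apply: ler_sum => i _; apply: ler_wpM2r => //.
by case/andP: (ct_ab k i).
Qed.

Lemma linear_le_period_cost (q : qty K n) (rho : R) : meets q s ->
  s_size <= rho -> b <= rho * a ->
  linear_fixed_cost f q + b * s_size <= rho * period_cost f ct q.
Proof.
move=> q_s size_le b_le; have rho_ge0 : 0 <= rho by apply: le_trans size_le.
rewrite /period_cost -(sum_uniform_cost b q_s) -big_split mulr_sumr /=.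
apply: ler_sum => k _; rewrite mulrDr; apply: lerD.
  rewrite -mulr_sumr -natr_sum; set M := (\sum_i q k i)%N.
  have : M%:R <= rho.
    apply: le_trans size_le; rewrite ler_nat -(eq_bigr _ (fun i _ => q_s i)).
    by apply: leq_sum => i _; rewrite (bigD1 k) //= leq_addr.
  have := f_ge0 k; case: ifP => [_ | /negbT]; first by rewrite mulr1; nra.
  by rewrite -leqNgt leqn0 => /eqP->; rewrite !mulr0.
rewrite mulr_sumr; apply: ler_sum => i _.
have [a_le _] := andP (ct_ab k i); rewrite mulrA; apply: ler_wpM2r => //.
exact: le_trans b_le (ler_wpM2l rho_ge0 a_le).
Qed.

Lemma rdc_only_cost_le : period_cost f ct (rdc_only K s) <= f (rdc K) + b * s_size.
Proof.
rewrite /period_cost (bigD1 (rdc K)) //= [X in _ + X]big1 => [|k fdc_k]; last first.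
  rewrite /rdc_only (negbTE fdc_k) big1_eq mulr0 add0r.
  by rewrite big1 // => i _; rewrite mulr0.
rewrite /rdc_only eqxx addr0; apply: lerD.
  by case: ifP; rewrite ?mulr1 ?mulr0.
rewrite /order_size natr_sum mulr_sumr; apply: ler_sum => i _.
by apply: ler_wpM2r => //; case/andP: (ct_ab (rdc K) i).
Qed.

Lemma period_cost_ge_used (q : qty K n) : meets q s -> (0 < \sum_i s i)%N ->
  exists k, f k + a * s_size <= period_cost f ct q.
Proof.
move=> q_s s_gt0.
have [k used_k] : exists k, (0 < \sum_i q k i)%N.
  apply/existsP; apply: contraTT s_gt0 => /existsPn unused.
  rewrite -leqNgt leqn0 -(eq_bigr _ (fun i _ => q_s i)) exchange_big /=.
  by rewrite sum_nat_eq0; apply/forallP => k; rewrite -leqn0 leqNgt unused.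
exists k; rewrite /period_cost big_split /=; apply: lerD.
  rewrite (bigD1 k) //= used_k mulr1 lerDl.
  by apply: sumr_ge0 => k' _; rewrite mulr_ge0 //; case: ifP.
rewrite -(sum_uniform_cost a q_s); apply: ler_sum => k' _; apply: ler_sum => i _.
by apply: ler_wpM2r => //; case/andP: (ct_ab k' i).
Qed.

End PeriodCost.

Lemma fmin_le (R : realFieldType) (K : nat) (f : 'I_K.+1 -> R) k :
  k != rdc K -> fmin f <= f k.
Proof. by move=> fdc_k; apply: bigmin_le_cond. Qed.

Lemma fmin_ge0 (R : realFieldType) (K : nat) (f : 'I_K.+1 -> R) :
  (forall k, 0 <= f k) -> 0 <= fmin f.
Proof. by move=> f_ge0; apply: le_bigmin. Qed.

Section Feasible.
Variables (K n T : nat) (I0 : qty K n) (S : nat -> 'I_n -> nat) (m : nat -> qty K n).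
Hypothesis m_feasible : feasible I0 S T m.

Lemma feasible_meets t : (t < T)%N -> meets (m t) (S t).
Proof. exact: m_feasible.1. Qed.

Lemma feasible_usage_le t k i : (t <= T)%N -> k != rdc K ->
  (\sum_(s < t) m s k i <= I0 k i)%N.
Proof.
move=> + fdc_k; elim: t => [|t IH] le_tT; first by rewrite big_ord0.
rewrite big_ord_recr /= -(subnKC (IH (ltnW le_tT))) leq_add2l.
exact: m_feasible.2.
Qed.

End Feasible.

Section OrderSizeFPriority.
Variables (R : realFieldType) (K n T : nat) (f : 'I_K.+1 -> R) (theta : R).
Variables (I0 : qty K n) (S : nat -> 'I_n -> nat) (c : nat -> 'I_K.+1 -> 'I_n -> R).
Local Notation prec := (prec_F f).
Local Notation rdc := (rdc K).
Local Notation os_plan := (gpg_plan (fun _ => prec) (order_size_gate theta) I0 S c).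
Local Notation os_inv := (gpg_inv (fun _ => prec) (order_size_gate theta) I0 S c).

Definition small_period t := order_size R (S t) <= theta.

Lemma os_plan_small t :
  small_period t -> os_plan t = greedy_plan (fun _ => prec) (os_inv t) (S t).
Proof. by rewrite /small_period /gpg_plan /gpg_decision /order_size_gate ltNge => ->. Qed.

Lemma os_plan_large t : ~~ small_period t -> os_plan t = rdc_only K (S t).
Proof.
by rewrite /small_period /gpg_plan /gpg_decision /order_size_gate ltNge => /negbTE->.
Qed.

Lemma os_inv_succ t k i : os_inv t.+1 k i = (os_inv t k i - os_plan t k i)%N.
Proof. by []. Qed.

Lemma os_plan_meets t : meets (os_plan t) (S t).
Proof.
move=> i; have [/os_plan_small-> | /os_plan_large->] := boolP (small_period t).
  exact: greedy_plan_sum.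
by rewrite (bigD1 rdc) //= /rdc_only eqxx big1 ?addn0 // => k /negbTE->.
Qed.

Lemma os_plan_le_inv t k i : k != rdc -> (os_plan t k i <= os_inv t k i)%N.
Proof.
move=> fdc_k; have [/os_plan_small-> | /os_plan_large->] := boolP (small_period t).
  by rewrite /greedy_plan (negbTE fdc_k) greedy_hat_le.
by rewrite /rdc_only (negbTE fdc_k).
Qed.

Lemma os_inv_accounting t k i : k != rdc ->
  (\sum_(s < t) os_plan s k i + os_inv t k i)%N = I0 k i.
Proof.
move=> fdc_k; elim: t => [|t IH]; first by rewrite big_ord0.
by rewrite big_ord_recr os_inv_succ /= -addnA subnKC ?os_plan_le_inv.
Qed.

Lemma os_inv_le s t k i : (s <= t)%N -> (os_inv t k i <= os_inv s k i)%N.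
Proof.
move/subnKC <-; elim: (t - s)%N => [|d IH]; first by rewrite addn0.
by rewrite addnS os_inv_succ; apply: leq_trans (leq_subr _ _) IH.
Qed.

Definition small_usage (q : nat -> qty K n) k i :=
  (\sum_(t < T | small_period t) q t k i)%N.

Lemma sum_small_usage (q : nat -> qty K n) i :
  (forall t, (t < T)%N -> meets (q t) (S t)) ->
  (\sum_k small_usage q k i = \sum_(t < T | small_period t) S t i)%N.
Proof. by move=> q_S; rewrite exchange_big; apply: eq_bigr => t _; apply: q_S. Qed.

Lemma os_small_usage_accounting k i : k != rdc ->
  (small_usage os_plan k i + os_inv T k i)%N = I0 k i.
Proof.
move=> fdc_k; rewrite -(os_inv_accounting T i fdc_k).
rewrite [X in (_ = X + _)%N](bigID (fun t : 'I_T => small_period t)) /=.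
rewrite [X in (_ = _ + X + _)%N]big1 ?addn0 // => t /os_plan_large->.
by rewrite /rdc_only (negbTE fdc_k).
Qed.

Variable m : nat -> qty K n.
Hypothesis m_feasible : feasible I0 S T m.

Lemma small_usage_feasible_le k i : k != rdc -> (small_usage m k i <= I0 k i)%N.
Proof.
move=> fdc_k; apply: leq_trans (feasible_usage_le m_feasible i (leqnn T) fdc_k).
by rewrite [X in (_ <= X)%N](bigID (fun t : 'I_T => small_period t)) leq_addr.
Qed.

Lemma os_small_usage_cheapest_first i j k :
  (0 < small_usage os_plan j i)%N -> f k < f j ->
  (small_usage m k i <= small_usage os_plan k i)%N.
Proof.
move=> used_j lt_kj.
have [t /andP[small_t used_jt]] : exists t : 'I_T, small_period t && (0 < os_plan t j i)%N.
  apply/existsP; apply: contraTT used_j => /existsPn unused.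
  rewrite -leqNgt leqn0 sum_nat_eq0; apply/forall_inP => t small_t.
  by move: (unused t); rewrite small_t -leqNgt leqn0.
move: used_jt; rewrite os_plan_small // => used_jt.
have fdc_k : k != rdc.
  apply: contraTneq lt_kj => ->; rewrite -leNgt.
  have [-> // | fdc_j] := eqVneq j rdc.
  by move: used_jt; rewrite /greedy_plan (negbTE fdc_j) => /greedy_hat_gt0/prec_F_le.
have exhausted_k : os_inv t.+1 k i = 0%N.
  rewrite os_inv_succ os_plan_small // /greedy_plan (negbTE fdc_k).
  by rewrite (greedy_plan_exhausts_cheaper used_jt lt_kj fdc_k) subnn.
have : os_inv T k i = 0%N by apply/eqP; rewrite -leqn0 -exhausted_k os_inv_le.
move/(congr1 (addn (small_usage os_plan k i))).
rewrite os_small_usage_accounting // addn0 => <-.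
exact: small_usage_feasible_le.
Qed.

Variables (a b : R).
Hypothesis f_ge0 : forall k, 0 <= f k.
Hypothesis a_gt0 : 0 < a.
Hypothesis a_le_b : a <= b.
Hypothesis theta_ge0 : 0 <= theta.
Hypothesis fmin_theta_gt0 : 0 < fmin f + a * theta.
Hypothesis c_ab : forall t, (t < T)%N -> forall k i, a <= c t k i <= b.

Local Notation rho :=
  (Num.max theta (Num.max ((f rdc + b * theta) / (fmin f + a * theta)) (b / a))).

Lemma theta_le_rho : theta <= rho.
Proof. by rewrite le_max lexx. Qed.

Lemma b_le_rho_a : b <= rho * a.
Proof. by rewrite -ler_pdivrMr // !le_max lexx !orbT. Qed.

Lemma gate_cost_le_rho : f rdc + b * theta <= rho * (fmin f + a * theta).
Proof. by rewrite -ler_pdivrMr // !le_max lexx !orbT. Qed.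

Lemma rho_ge1 : 1 <= rho.
Proof. by rewrite -(ler_pM2r a_gt0) mul1r (le_trans a_le_b b_le_rho_a). Qed.

Lemma large_order_cost_le k x : theta < x ->
  f rdc + b * x <= rho * (f k + a * x).
Proof.
move=> lt_theta_x; have x_gt0 := le_lt_trans theta_ge0 lt_theta_x.
have [-> | fdc_k] := eqVneq k rdc.
  have : 0 <= (rho - 1) * f rdc by rewrite mulr_ge0 ?subr_ge0 ?rho_ge1.
  have : 0 <= (rho * a - b) * x by rewrite mulr_ge0 ?subr_ge0 ?b_le_rho_a ?ltW.
  nra.
have := gate_cost_le_rho.
have : 0 <= rho * (f k - fmin f).
  by rewrite mulr_ge0 ?subr_ge0 ?fmin_le ?(le_trans ler01 rho_ge1).
have : 0 <= (rho * a - b) * (x - theta) by rewrite mulr_ge0 ?subr_ge0 ?b_le_rho_a ?ltW.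
nra.
Qed.

Lemma small_period_cost_le t : (t < T)%N -> small_period t ->
  period_cost f (c t) (os_plan t) <= rho * period_cost f (c t) (m t)
    + (linear_fixed_cost f (os_plan t) - linear_fixed_cost f (m t)).
Proof.
move=> lt_tT small_t.
have := period_cost_le_linear f_ge0 (c_ab lt_tT) (os_plan_meets t).
have := linear_le_period_cost f_ge0 (c_ab lt_tT) (feasible_meets m_feasible lt_tT)
  (le_trans small_t theta_le_rho) b_le_rho_a.
lra.
Qed.

Lemma large_period_cost_le t : (t < T)%N -> ~~ small_period t ->
  period_cost f (c t) (os_plan t) <= rho * period_cost f (c t) (m t).
Proof.
move=> lt_tT large_t; rewrite os_plan_large //.
have lt_theta : theta < order_size R (S t) by rewrite ltNge.
have S_gt0 : (0 < \sum_i S t i)%N by rewrite -(ltr0n R) (le_lt_trans theta_ge0).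
have [k cost_m_ge] := period_cost_ge_used f_ge0 (c_ab lt_tT)
  (feasible_meets m_feasible lt_tT) S_gt0.
apply: le_trans (rdc_only_cost_le (S t) f_ge0 (c_ab lt_tT)) _.
apply: le_trans (large_order_cost_le k lt_theta) _.
by rewrite ler_wpM2l // (le_trans ler01 rho_ge1).
Qed.

Lemma sum_small_linear_fixed_cost (q : nat -> qty K n) :
  \sum_(t < T | small_period t) linear_fixed_cost f (q t)
  = \sum_i \sum_k f k * (small_usage q k i)%:R.
Proof.
rewrite /linear_fixed_cost [RHS]exchange_big /= [LHS]exchange_big /=; apply: eq_bigr => k _.
rewrite exchange_big /=; apply: eq_bigr => i _.
by rewrite natr_sum mulr_sumr.
Qed.

Lemma os_small_linear_fixed_cost_le :
  \sum_(t < T | small_period t) linear_fixed_cost f (os_plan t)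
  <= \sum_(t < T | small_period t) linear_fixed_cost f (m t).
Proof.
rewrite !sum_small_linear_fixed_cost; apply: ler_sum => i _.
apply: (cheapest_first_weighted_sum_le (X := fun k => small_usage os_plan k i)
                                       (Y := fun k => small_usage m k i)) => //.
  rewrite (sum_small_usage _ (fun t _ => os_plan_meets t)).
  by rewrite (sum_small_usage _ (feasible_meets m_feasible)).
by move=> j k; apply: os_small_usage_cheapest_first.
Qed.

Theorem os_fp_competitive : os_fp_cost f theta I0 S c T <= rho * total_cost f c T m.
Proof.
pose gap t := if small_period t
  then linear_fixed_cost f (os_plan t) - linear_fixed_cost f (m t) else 0.
have : \sum_(t < T) period_cost f (c t) (os_plan t)
       <= \sum_(t < T) (rho * period_cost f (c t) (m t) + gap t).
  apply: ler_sum => t _; rewrite /gap; case: ifP => [small_t | /negbT large_t].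
    exact: small_period_cost_le.
  by rewrite addr0; apply: large_period_cost_le.
rewrite big_split /= -mulr_sumr -big_mkcond /= sumrB.
have := os_small_linear_fixed_cost_le; rewrite /os_fp_cost /total_cost; lra.
Qed.

End OrderSizeFPriority.

(* The nonnegative root of [a θ² + (φ - b) θ = f0], i.e. the fixed point of
   [θ ↦ (f0 + b θ) / (φ + a θ)]. *)
Definition balanced_threshold (R : rcfType) (f0 phi a b : R) : R :=
  Num.sqrt (f0 / a + (phi - b) ^+ 2 / (4 * a ^+ 2)) - (phi - b) / (2 * a).

Lemma balanced_thresholdP (R : rcfType) (f0 phi a b : R) :
  0 <= f0 -> 0 <= phi -> 0 < a -> 0 < b ->
  let theta := balanced_threshold f0 phi a b in
  [/\ 0 <= theta, 0 < phi + a * theta & (f0 + b * theta) / (phi + a * theta) = theta].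
Proof.
move=> f0_ge0 phi_ge0 a_gt0 b_gt0; rewrite /balanced_threshold.
set x := (phi - b) / (2 * a).
have a_neq0 : a != 0 by rewrite gt_eqF.
have -> : (phi - b) ^+ 2 / (4 * a ^+ 2) = x ^+ 2 by rewrite /x; field.
have phi_eq : phi = b + 2 * a * x by rewrite /x; field.
set r := Num.sqrt _; have r_ge0 : 0 <= r by apply: sqrtr_ge0.
have ar2 : a * r ^+ 2 = f0 + a * x ^+ 2.
  rewrite sqr_sqrtr; first by field.
  by rewrite addr_ge0 ?sqr_ge0 // divr_ge0 // ltW.
have theta_ge0 : 0 <= r - x.
  have : x ^+ 2 <= r ^+ 2 by nra.
  nra.
have den_gt0 : 0 < phi + a * (r - x).
  have : 0 <= a * r by rewrite mulr_ge0 // ltW.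
  nra.
split=> //; apply: (canLR (mulfK (lt0r_neq0 den_gt0))).
rewrite phi_eq; nra.
Qed.

Theorem theorem1 (R : rcfType) (K : nat) (f : 'I_K.+1 -> R) (a b : R) :
  (1 <= K)%N -> (forall k, 0 <= f k) -> 0 < a -> a < b ->
  (forall theta : R, 0 <= theta -> 0 < fmin f + a * theta ->
     forall (n T : nat) (I0 : qty K n) (S : nat -> 'I_n -> nat)
            (c : nat -> 'I_K.+1 -> 'I_n -> R),
     (forall t k i, (t < T)%N -> a <= c t k i <= b) ->
     forall m : nat -> qty K n, feasible I0 S T m ->
       os_fp_cost f theta I0 S c T
       <= Num.max theta
            (Num.max ((f (rdc K) + b * theta) / (fmin f + a * theta)) (b / a))
          * total_cost f c T m)
  /\
  (forall (n T : nat) (I0 : qty K n) (S : nat -> 'I_n -> nat)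
          (c : nat -> 'I_K.+1 -> 'I_n -> R),
     (forall t k i, (t < T)%N -> a <= c t k i <= b) ->
     forall m : nat -> qty K n, feasible I0 S T m ->
       os_fp_cost f
         (Num.sqrt (f (rdc K) / a + (fmin f - b) ^+ 2 / (4 * a ^+ 2))
          - (fmin f - b) / (2 * a)) I0 S c T
       <= Num.max
            (Num.sqrt (f (rdc K) / a + (fmin f - b) ^+ 2 / (4 * a ^+ 2))
             - (fmin f - b) / (2 * a))
            (b / a)
          * total_cost f c T m).
Proof.
move=> _ f_ge0 a_gt0 lt_ab.
split=> [theta theta_ge0 fmin_theta_gt0 |] n T I0 S c c_ab m m_feasible;
  have c_ab_at t lt_tT k i : a <= c t k i <= b := c_ab t k i lt_tT.
  by apply: (os_fp_competitive m_feasible) => //; apply: ltW.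
have [theta_ge0 fmin_theta_gt0 fixed] := balanced_thresholdP (f_ge0 (rdc K))
  (fmin_ge0 f_ge0) a_gt0 (lt_trans a_gt0 lt_ab).
have := os_fp_competitive m_feasible f_ge0 a_gt0 (ltW lt_ab) theta_ge0 fmin_theta_gt0 c_ab_at.
by rewrite fixed maxA maxxx.
Qed.
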